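(* If $X$ is a closed permutation class with $\mathrm{al}(X)=\infty$, then $|X\cap S_n|\ge 2^{n-1}$ for every $n\in\mathbf{N}$.
   Context: $S_n$ is the set of permutations of $[n]$, $S=\bigcup_n S_n$. $\pi\prec\rho$ means $\rho$ (as a sequence) has a subsequence order-isomorphic to $\pi$ (i.e. with the same relative order of entries). A closed permutation class is a set $X\subset S$ closed downward under $\prec$. A permutation $\sigma$ is alternating if every value of $\sigma$ at an odd position is larger than every value of $\sigma$ at an even position, i.e. $\sigma(\{1,3,5,\dots\})>\sigma(\{2,4,6,\dots\})$. For $\pi\in S$, $\mathrm{al}(\pi)$ is the maximum length of an alternating permutation $\sigma$ with $\sigma\prec\pi$ or $\sigma\prec\pi^{-1}$, and for $X\subset S$, $\mathrm{al}(X)=\sup\{\mathrm{al}(\pi):\pi\in X\}$. *)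

(* Permutations of [n] are 'S_n = {perm 'I_n}
   (positions and values 0-based). *)
From mathcomp Require Import all_boot all_order all_fingroup.
Set Implicit Arguments. Unset Strict Implicit. Unset Printing Implicit Defensive.

Definition contains m n (pi : 'S_m) (rho : 'S_n) : bool :=
  [exists f : {ffun 'I_m -> 'I_n},
    [forall i : 'I_m, forall j : 'I_m,
      ((i < j) ==> (f i < f j)) &&
      ((pi i < pi j) == (rho (f i) < rho (f j)))]].

(* Alternating: every value at an odd (1-based) position, i.e. an even
   0-based index, exceeds every value at an even (1-based) position. *)
Definition alternating k (sigma : 'S_k) : bool :=
  [forall i : 'I_k, forall j : 'I_k,
     (~~ odd i && odd j) ==> (sigma j < sigma i)].

(* al(pi): maximum length of an alternating sigma with sigma ≺ pi or
   sigma ≺ pi^-1 (such sigma has length at most n; the empty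
   permutation is always alternating and contained). *)
Definition al n (pi : 'S_n) : nat :=
  \max_(k < n.+1 | [exists sigma : 'S_k,
        alternating sigma && (contains sigma pi || contains sigma pi^-1)]) k.

(* A class X is given by its slices X n = X ∩ S_n. *)
Definition closed_class (X : forall n, {set 'S_n}) : Prop :=
  forall m n (pi : 'S_m) (rho : 'S_n),
    contains pi rho -> rho \in X n -> pi \in X m.

Definition al_infinite (X : forall n, {set 'S_n}) : Prop :=
  forall k, exists n (pi : 'S_n), pi \in X n /\ k <= al pi.

From mathcomp Require Import all_boot all_order all_fingroup.
From mathcomp Require Import zify.
Set Implicit Arguments. Unset Strict Implicit. Unset Printing Implicit Defensive.

(* An alternating permutation of length 2n has n "tops" sigma(2i), all above
   its n "bottoms" sigma(2i+1). Choosing for every i < n either the i-th top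
   or the i-th bottom gives a pattern of length n contained in sigma. If the
   index i0 of the smallest top is always chosen as a top, the set of indices
   chosen as tops is recovered from the pattern as the indices whose value is
   at least the value at i0, so these 2^(n-1) patterns are pairwise distinct.
   As al(X) is infinite, some pi in X contains such a sigma, or pi^-1 does;
   by closure X then contains the 2^(n-1) patterns, or their inverses. *)

Lemma homo_ord_inj m n (f : 'I_m -> 'I_n) : {homo f : i j / i < j} -> injective f.
Proof.
move=> f_homo i j fij; case: (ltngtP i j) => [/f_homo | /f_homo | /val_inj //];
  by rewrite fij ltnn.
Qed.

Lemma homo_ord_mono m n (f : 'I_m -> 'I_n) :
  {homo f : i j / i < j} -> {mono f : i j / i < j}.
Proof.
move=> f_homo i j; case: (ltngtP i j) => [/f_homo -> // | /f_homo ji | /val_inj ->].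
  by rewrite ltnNge ltnW.
by rewrite ltnn.
Qed.

Lemma containsP m n (p : 'S_m) (rho : 'S_n) :
  reflect (exists2 f : 'I_m -> 'I_n, {homo f : i j / i < j} &
             forall i j, (p i < p j) = (rho (f i) < rho (f j)))
          (contains p rho).
Proof.
apply: (iffP existsP) => [[f /forallP f_emb] | [f f_homo f_pat]].
  exists f => i j; have /forallP/(_ j)/andP[/implyP f_ij /eqP p_ij] := f_emb i.
  - exact: f_ij.
  - exact: p_ij.
exists [ffun i => f i]; apply/forallP => i; apply/forallP => j.
by rewrite !ffunE f_pat eqxx andbT; apply/implyP; apply: f_homo.
Qed.

Lemma contains_trans m n p (a : 'S_m) (b : 'S_n) (c : 'S_p) :
  contains a b -> contains b c -> contains a c.
Proof.
move=> /containsP[f f_homo f_pat] /containsP[g g_homo g_pat].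
apply/containsP; exists (g \o f) => [i j /f_homo /g_homo // | i j /=].
by rewrite f_pat g_pat.
Qed.

(* Positions of a^-1 are values of a; they embed through the values of b. *)
Lemma contains_inv m n (a : 'S_m) (b : 'S_n) :
  contains a b -> contains (a^-1)%g (b^-1)%g.
Proof.
move=> /containsP[f f_homo f_pat].
apply/containsP; exists (fun v => b (f ((a^-1)%g v))) => [v w | v w].
  by rewrite -f_pat !permKV.
by rewrite !permK (homo_ord_mono f_homo).
Qed.

Section Standardization.

Variables (n : nat) (g : 'I_n -> nat).
Hypothesis g_inj : injective g.

Definition rank i := #|[set j | g j < g i]|.

Lemma rank_lt i : rank i < n.
Proof.
rewrite -[n in _ < n]card_ord -cardsT; apply: proper_card; apply/properP.
by split; [exact: subsetT | exists i; rewrite !inE ?ltnn].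
Qed.

Lemma rank_homo i j : g i < g j -> rank i < rank j.
Proof.
move=> gij; apply: proper_card; apply/properP; split.
  by apply/subsetP => k; rewrite !inE => /ltn_trans; apply.
by exists i; rewrite !inE ?gij ?ltnn.
Qed.

Lemma ltn_rank i j : (rank i < rank j) = (g i < g j).
Proof.
case: (ltngtP (g i) (g j)) => [/rank_homo // | /rank_homo rji | /g_inj ->].
  by rewrite ltnNge ltnW.
by rewrite ltnn.
Qed.

Definition std_ord i : 'I_n := Ordinal (rank_lt i).

Lemma std_ord_inj : injective std_ord.
Proof.
move=> i j /(congr1 val) /= rij; apply: g_inj.
by case: (ltngtP (g i) (g j)) => // /rank_homo; rewrite rij ltnn.
Qed.

Definition std : 'S_n := perm std_ord_inj.

Lemma ltn_std i j : (std i < std j) = (g i < g j).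
Proof. by rewrite !permE ltn_rank. Qed.

End Standardization.

Section Subpatterns.

Variables (L : nat) (sigma : 'S_L) (n : nat).
Hypothesis n_le : n.*2 <= L.

Lemma top_lt (i : 'I_n) : i.*2 < L.
Proof. by apply: leq_trans n_le; rewrite ltn_double. Qed.

Lemma bottom_lt (i : 'I_n) : i.*2.+1 < L.
Proof. by apply: leq_trans n_le; rewrite -doubleS leq_double. Qed.

Definition top i : 'I_L := Ordinal (top_lt i).
Definition bottom i : 'I_L := Ordinal (bottom_lt i).

Definition pick (S : {set 'I_n}) i := if i \in S then top i else bottom i.

Lemma pick_homo S : {homo pick S : i j / i < j}.
Proof.
move=> i j ij; have lt2 : i.*2.+1 < j.*2 by rewrite -doubleS leq_double.
by rewrite /pick; case: (i \in S); case: (j \in S) => /=; lia.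
Qed.

Lemma pick_val_inj S : injective (fun i => val (sigma (pick S i))).
Proof. by move=> i j /val_inj /perm_inj /(homo_ord_inj (@pick_homo S)). Qed.

Definition subpattern S : 'S_n := std (@pick_val_inj S).

Lemma contains_subpattern S : contains (subpattern S) sigma.
Proof.
by apply/containsP; exists (pick S) => [|i j]; [exact: pick_homo | rewrite ltn_std].
Qed.

Hypothesis sigma_alt : alternating sigma.

Lemma bottom_lt_top i j : sigma (bottom i) < sigma (top j).
Proof.
have /forallP/(_ (bottom i))/implyP := forallP sigma_alt (top j).
by rewrite /= !odd_double; apply.
Qed.

Section Anchor.

Variable i0 : 'I_n.
Hypothesis top_i0_min : forall i, sigma (top i0) <= sigma (top i).

Lemma subpattern_anchorE (S : {set 'I_n}) i :
  i0 \in S -> (subpattern S i0 <= subpattern S i) = (i \in S).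
Proof.
move=> i0S; rewrite leqNgt ltn_std /pick i0S.
case: (i \in S); first by rewrite -leqNgt top_i0_min.
by rewrite bottom_lt_top.
Qed.

Lemma card_anchored_subpatterns :
  #|[set subpattern (i0 |: T) | T in powerset [set~ i0]]| = 2 ^ n.-1.
Proof.
rewrite card_in_imset ?card_powerset ?cardsC1 ?card_ord //.
move=> T T'; rewrite !inE => /subsetP T_i0 /subsetP T'_i0 eqTT'.
have i0T : i0 \notin T by apply/negP => /T_i0; rewrite !inE eqxx.
have i0T' : i0 \notin T' by apply/negP => /T'_i0; rewrite !inE eqxx.
rewrite -(setU1K i0T) -(setU1K i0T'); congr (_ :\ _); apply/setP => i.
rewrite -(subpattern_anchorE i (setU11 i0 T)).
by rewrite -(subpattern_anchorE i (setU11 i0 T')) eqTT'.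
Qed.

End Anchor.

Lemma many_subpatterns :
  exists2 F : {set 'S_n}, 2 ^ n.-1 <= #|F| & {in F, forall p, contains p sigma}.
Proof.
have [n0 | n_gt0] := posnP n.
  exists [set subpattern set0]; first by rewrite cards1 n0.
  by move=> p /set1P ->; apply: contains_subpattern.
have [i0 _ i0_min] :=
  @arg_minnP _ (Ordinal n_gt0) predT (fun i => val (sigma (top i))) isT.
exists [set subpattern (i0 |: T) | T in powerset [set~ i0]].
  by rewrite card_anchored_subpatterns // => i; apply: i0_min.
by move=> _ /imsetP[T _ ->]; apply: contains_subpattern.
Qed.

End Subpatterns.

Lemma al_attained n (pi : 'S_n) :
  exists2 sigma : 'S_(al pi), alternating sigma &
    contains sigma pi || contains sigma (pi^-1)%g.
Proof.
set P := fun k : 'I_n.+1 => [exists sigma : 'S_k,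
  alternating sigma && (contains sigma pi || contains sigma (pi^-1)%g)].
have P0 : P ord0.
  apply/existsP; exists 1%g; apply/andP; split; first by apply/forallP => -[].
  by apply/orP; left; apply/containsP; exists (fun i => widen_ord (leq0n n) i) => -[].
have P_gt0 : 0 < #|P| by apply/card_gt0P; exists ord0.
have [k Pk al_k] := eq_bigmax_cond (fun k : 'I_n.+1 => val k) P_gt0.
rewrite /al (_ : \max_(k < n.+1 | _) k = k) //.
by case/existsP: Pk => sigma /andP[]; exists sigma.
Qed.

Lemma card_le_class (X : forall n, {set 'S_n}) m n (pi : 'S_m) L (sigma : 'S_L)
    (F : {set 'S_n}) :
  closed_class X -> pi \in X m -> contains sigma pi || contains sigma (pi^-1)%g ->
  {in F, forall p, contains p sigma} -> #|F| <= #|X n|.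
Proof.
move=> closedX piX /orP[sigma_pi | sigma_pi'] F_sigma.
  apply: subset_leq_card; apply/subsetP => p /F_sigma p_sigma.
  exact: closedX (contains_trans p_sigma sigma_pi) piX.
rewrite -(card_imset _ (@invg_inj _)); apply: subset_leq_card.
apply/subsetP => _ /imsetP[p /F_sigma p_sigma ->]; apply: closedX piX.
by rewrite -[pi]invgK; apply: contains_inv; apply: contains_trans sigma_pi'.
Qed.

Theorem mainTheorem2 (X : forall n, {set 'S_n}) :
  closed_class X -> al_infinite X ->
  forall n : nat, 2 ^ n.-1 <= #|X n|.
Proof.
move=> closedX alX n.
have [m [pi [piX n_le_al]]] := alX n.*2.
have [sigma sigma_alt sigma_pi] := al_attained pi.
have [F F_card F_sigma] := many_subpatterns n_le_al sigma_alt.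
exact: leq_trans F_card (card_le_class closedX piX sigma_pi F_sigma).
Qed.
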